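(* For every integer $n\ge 0$, $$\ell_n=(-1)^{n-1}\int_1^{+\infty}\frac{\{x\}}{x^2}L_n(\log x)\,\mathrm{d}x .$$
   Context: $\{x\}=x-\lfloor x\rfloor$ is the fractional part. $L_n(u)=\sum_{k=0}^n\binom{n}{k}\frac{(-1)^k}{k!}u^k$ are the Laguerre polynomials. The Stieltjes constants are $\gamma_n=\lim_{N\to\infty}\left(\sum_{k=1}^N\frac{\log^n k}{k}-\frac{\log^{n+1}N}{n+1}\right)$. The coefficients $\ell_n$ are defined by $\ell_0=\gamma_0-1$ and $\ell_n=\sum_{k=1}^n\binom{n-1}{k-1}\frac{(-1)^{n-k}}{k!}\gamma_k$ for $n\ge1$. *)

From Stdlib Require Import Reals.
From Coquelicot Require Import Coquelicot.
Open Scope R_scope.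

(* {x} = x - floor x ; Stdlib's frac_part x = x - IZR (Int_part x), Int_part = floor *)
Definition frac (x : R) : R := frac_part x.

Definition laguerre (n : nat) (u : R) : R :=
  sum_f_R0 (fun k => Binomial.C n k * (-1) ^ k / INR (Factorial.fact k) * u ^ k) n.

Definition stieltjes_seq (n : nat) (N : nat) : R :=
  sum_f_R0 (fun j => (ln (INR (j + 1))) ^ n / INR (j + 1)) (N - 1)
  - (ln (INR N)) ^ (n + 1) / INR (n + 1).

Definition stieltjes (n : nat) : R := real (Lim_seq (stieltjes_seq n)).

Definition ell (n : nat) : R :=
  match n with
  | O => stieltjes 0 - 1
  | S m => sum_f_R0 (fun j => Binomial.C m j * (-1) ^ (n - (j + 1))
                               / INR (Factorial.fact (j + 1)) * stieltjes (j + 1)) m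
  end.

From Stdlib Require Import Reals Lra Lia Classical.
From Coquelicot Require Import Coquelicot.
Open Scope R_scope.

(* Write G_i = int_1^oo {x} log^i x / x^2 dx ("fractional moments").  By
   linearity and the definition of the Laguerre polynomial, the integral on
   the right equals  sum_k C(n,k) (-1)^k / k! * G_k.  The proof has three parts.
   1. Improper integrals on [1, +oo): closure under extensionality, scaling
      and finite sums (from Coquelicot), existence for nonnegative integrands
      with bounded partial integrals, and convergence along integers.
   2. Each G_i exists (0 <= {x} log^i x / x^2 <= log^i x / x^2, which has an
      explicit primitive), and on every [k, k+1] the integrand
      {x}(log^j x - j log^(j-1) x)/x^2 has an explicit primitive; summing over
      k gives  gamma_j = 0^j - (G_j - j G_(j-1)).
   3. Substituting this into the definition of ell_n, a summation by parts and
      Pascal's rule turn the coefficients into the Laguerre coefficients. *)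

Definition is_RInt_1_oo (f : R -> R) (L : R) : Prop :=
  is_RInt_gen f (at_point 1) (Rbar_locally p_infty) L.

Lemma is_RInt_1_oo_ext (f g : R -> R) (L : R) :
  (forall x, 1 < x -> f x = g x) -> is_RInt_1_oo f L -> is_RInt_1_oo g L.
Proof.
  intros Hfg. apply is_RInt_gen_ext.
  apply (Filter_prod _ _ _ (fun a => a = 1) (fun b => 1 < b)).
  - reflexivity.
  - exists 1. tauto.
  - intros a b -> Hb x [Hx _]. simpl in Hx. rewrite Rmin_left in Hx by lra. auto.
Qed.

Lemma is_RInt_1_oo_scal (c : R) (f : R -> R) (L : R) :
  is_RInt_1_oo f L -> is_RInt_1_oo (fun x => c * f x) (c * L).
Proof. exact (is_RInt_gen_scal f c L). Qed.

Lemma is_RInt_1_oo_sum (F : nat -> R -> R) (L : nat -> R) (n : nat) :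
  (forall k, (k <= n)%nat -> is_RInt_1_oo (F k) (L k)) ->
  is_RInt_1_oo (fun x => sum_f_R0 (fun k => F k x) n) (sum_f_R0 L n).
Proof.
  induction n as [|n IH]; intros HF.
  - apply HF. lia.
  - apply (is_RInt_gen_plus (Fa := at_point 1) (Fb := Rbar_locally p_infty)
      (fun x => sum_f_R0 (fun k => F k x) n) (F (S n))).
    + apply IH. intros k Hk. apply HF. lia.
    + apply HF. lia.
Qed.

Lemma is_RInt_1_oo_intro (f : R -> R) (L : R) :
  (forall b, 1 <= b -> ex_RInt f 1 b) ->
  (forall eps, 0 < eps -> exists M, forall b, M <= b -> Rabs (RInt f 1 b - L) < eps) ->
  is_RInt_1_oo f L.
Proof.
  intros Hex Hlim P [eps HP].
  destruct (Hlim eps (cond_pos eps)) as [M HM].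
  apply (Filter_prod _ _ _ (fun a => a = 1) (fun b => Rmax M 1 < b)).
  - reflexivity.
  - exists (Rmax M 1). tauto.
  - intros a b -> Hb. pose proof (Rmax_l M 1). pose proof (Rmax_r M 1).
    exists (RInt f 1 b). split.
    + apply (RInt_correct (V := R_CompleteNormedModule)), Hex. lra.
    + apply HP, HM. lra.
Qed.

Lemma is_RInt_1_oo_seq (f : R -> R) (L : R) :
  is_RInt_1_oo f L -> is_lim_seq (fun N => RInt f 1 (INR N)) L.
Proof.
  intros Hf. apply is_lim_seq_spec. intros eps.
  destruct (Hf _ (locally_ball L eps)) as [Q S HQ [M HM] HQS].
  destruct (INR_archimed 1 M) as [N0 HN0]; [lra|].
  exists N0. intros N HN.
  assert (HS : S (INR N)) by (apply HM; apply le_INR in HN; lra).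
  destruct (HQS 1 (INR N) HQ HS) as [y [Hy Hball]].
  simpl in Hy. rewrite (is_RInt_unique _ _ _ _ Hy). exact Hball.
Qed.

(* A nonnegative, locally integrable f with bounded partial integrals has a
   convergent improper integral (the supremum of its partial integrals). *)
Lemma is_RInt_1_oo_nonneg (f : R -> R) (K : R) :
  (forall b, 1 <= b -> ex_RInt f 1 b) ->
  (forall x, 1 <= x -> 0 <= f x) ->
  (forall b, 1 <= b -> RInt f 1 b <= K) ->
  exists L, is_RInt_1_oo f L.
Proof.
  intros Hex Hpos HK.
  set (E := fun y => exists b, 1 <= b /\ y = RInt f 1 b).
  destruct (completeness E) as [L [HL_ub HL_least]].
  - exists K. intros y [b [Hb ->]]. auto.
  - exists (RInt f 1 1), 1. split; [lra|auto].
  - exists L. apply is_RInt_1_oo_intro; auto. intros eps Heps.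
    assert (Hb0 : exists b0, 1 <= b0 /\ L - eps < RInt f 1 b0).
    { apply NNPP. intros Hno. assert (L <= L - eps) by
        (apply HL_least; intros y [b [Hb ->]]; apply Rnot_lt_le; intros Hlt;
         apply Hno; exists b; auto).
      lra. }
    destruct Hb0 as [b0 [Hb0 HLb0]]. exists b0. intros b Hb.
    assert (Htail : ex_RInt f b0 b)
      by (apply (ex_RInt_Chasles_2 (V := R_CompleteNormedModule)) with 1; [lra | apply Hex; lra]).
    assert (Hmono : RInt f 1 b0 <= RInt f 1 b).
    { rewrite <- (RInt_Chasles (V := R_CompleteNormedModule) f 1 b0 b) by (auto; apply Hex; lra).
      assert (0 <= RInt f b0 b) by (apply RInt_ge_0; auto; intros; apply Hpos; lra).
      change (plus (RInt f 1 b0) (RInt f b0 b)) with (RInt f 1 b0 + RInt f b0 b). lra. }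
    assert (RInt f 1 b <= L) by (apply HL_ub; exists b; split; auto; lra).
    unfold Rabs; destruct Rcase_abs; lra.
Qed.

Lemma frac_on_unit_interval (k : nat) (x : R) :
  INR k < x < INR k + 1 -> frac x = x - INR k.
Proof.
  intros [Hlo Hhi]. unfold frac, frac_part.
  assert (Hfloor : Int_part x = Z.of_nat k).
  { unfold Int_part. rewrite <- (up_tech x (Z.of_nat k)).
    - lia.
    - rewrite <- INR_IZR_INZ. lra.
    - rewrite plus_IZR, <- INR_IZR_INZ. simpl. lra. }
  rewrite Hfloor, <- INR_IZR_INZ. ring.
Qed.

Lemma frac_bounds (x : R) : 0 <= frac x < 1.
Proof. unfold frac. destruct (base_fp x). lra. Qed.

(* {x} h(x) is Riemann integrable on [1, b] when h is continuous: on each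
   [k, k+1] it agrees with the continuous (x - k) h(x) except at endpoints. *)
Lemma ex_RInt_frac_mult (h : R -> R) :
  (forall x, 1 <= x -> continuous h x) ->
  forall b, 1 <= b -> ex_RInt (fun x => frac x * h x) 1 b.
Proof.
  intros Hh.
  assert (Hpiece : forall k : nat, (1 <= k)%nat ->
            ex_RInt (fun x => frac x * h x) (INR k) (INR k + 1)).
  { intros k Hk. apply le_INR in Hk. simpl in Hk.
    apply ex_RInt_ext with (fun x => (x - INR k) * h x).
    - intros x Hx. rewrite Rmin_left in Hx by lra. rewrite Rmax_right in Hx by lra.
      rewrite (frac_on_unit_interval k x) by lra. reflexivity.
    - apply (ex_RInt_continuous (V := R_CompleteNormedModule)). intros z Hz.
      rewrite Rmin_left in Hz by lra. rewrite Rmax_right in Hz by lra.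
      apply (continuous_mult (fun x => x - INR k) h).
      + apply (continuous_minus (fun x => x) (fun _ => INR k));
          [apply continuous_id | apply continuous_const].
      + apply Hh. lra. }
  assert (Hupto : forall (n : nat) b, 1 <= b <= INR (S n) -> ex_RInt (fun x => frac x * h x) 1 b).
  { induction n as [|n IH]; intros b Hb.
    - simpl in Hb. replace b with 1 by lra. apply ex_RInt_point.
    - destruct (Rle_dec b (INR (S n))) as [Hle|Hgt]; [apply IH; lra|].
      rewrite S_INR in Hb.
      apply ex_RInt_Chasles with (INR (S n)); [apply IH; rewrite S_INR; pose proof (pos_INR n); lra|].
      apply (ex_RInt_Chasles_1 (V := R_CompleteNormedModule)) with (INR (S n) + 1); [lra|].
      apply Hpiece. lia. }
  intros b Hb. destruct (INR_archimed 1 b) as [n Hn]; [lra|].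
  apply Hupto with n. rewrite S_INR. lra.
Qed.

(* The weight log^i x / x^2 and its primitive, obtained by integrating by
   parts:  P_0 = -1/x,  P_(i+1) = -log^(i+1) x / x + (i+1) P_i. *)
Definition logpow_sq (i : nat) (x : R) : R := ln x ^ i / x ^ 2.

Fixpoint logpow_sq_primitive (i : nat) (x : R) : R :=
  match i with
  | O => - / x
  | S i' => - (ln x ^ S i' / x) + INR (S i') * logpow_sq_primitive i' x
  end.

Lemma logpow_sq_primitive_deriv (i : nat) (x : R) :
  0 < x -> is_derive (logpow_sq_primitive i) x (logpow_sq i x).
Proof.
  intros Hx. unfold logpow_sq. induction i as [|i IH].
  - simpl. auto_derive; [lra|]. field. lra.
  - assert (Hhead : is_derive (fun y => - (ln y ^ S i / y)) x
              (- (INR (S i) * ln x ^ i / x / x - ln x ^ S i / x ^ 2))).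
    { auto_derive; [lra|]. rewrite S_INR. destruct i; simpl; field; lra. }
    assert (Htail := is_derive_scal _ x (INR (S i)) _ IH).
    assert (Hsum := is_derive_plus _ _ x _ _ Hhead Htail).
    apply (is_derive_ext _ (logpow_sq_primitive (S i))) in Hsum; [|reflexivity].
    replace (ln x ^ S i / x ^ 2) with (plus (- (INR (S i) * ln x ^ i / x / x - ln x ^ S i / x ^ 2))
                                            (INR (S i) * (ln x ^ i / x ^ 2))); [exact Hsum|].
    unfold plus. simpl. field. lra.
Qed.

Lemma ln_nonneg (x : R) : 1 <= x -> 0 <= ln x.
Proof. intros Hx. rewrite <- ln_1. apply ln_le; lra. Qed.

(* P_i <= 0 on [1, +oo), so int_1^b log^i x / x^2 dx <= - P_i(1). *)
Lemma logpow_sq_primitive_nonpos (i : nat) (x : R) : 1 <= x -> logpow_sq_primitive i x <= 0.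
Proof.
  intros Hx. induction i as [|i IH].
  - simpl. assert (0 < / x) by (apply Rinv_0_lt_compat; lra). lra.
  - change (logpow_sq_primitive (S i) x)
      with (- (ln x ^ S i / x) + INR (S i) * logpow_sq_primitive i x).
    assert (0 <= ln x ^ S i / x)
      by (apply Rdiv_le_0_compat; [apply pow_le, ln_nonneg|]; lra).
    pose proof (pos_INR (S i)). nra.
Qed.

Lemma logpow_sq_continuous (i : nat) (x : R) : 0 < x -> continuous (logpow_sq i) x.
Proof.
  intros Hx. apply (ex_derive_continuous (K := R_AbsRing) (V := R_NormedModule)).
  unfold logpow_sq. auto_derive. repeat split; try lra. pose proof (pow_lt x 2 Hx). simpl in *. lra.
Qed.

Lemma logpow_sq_nonneg (i : nat) (x : R) : 1 <= x -> 0 <= logpow_sq i x.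
Proof.
  intros Hx. unfold logpow_sq.
  apply Rdiv_le_0_compat; [apply pow_le, ln_nonneg; lra | apply pow_lt; lra].
Qed.

Lemma RInt_logpow_sq (i : nat) (b : R) :
  1 <= b -> RInt (logpow_sq i) 1 b = logpow_sq_primitive i b - logpow_sq_primitive i 1.
Proof.
  intros Hb. apply is_RInt_unique, (is_RInt_derive (logpow_sq_primitive i)).
  - intros x Hx. rewrite Rmin_left in Hx by lra. apply logpow_sq_primitive_deriv. lra.
  - intros x Hx. rewrite Rmin_left in Hx by lra. apply logpow_sq_continuous. lra.
Qed.

Definition frac_logpow (i : nat) (x : R) : R := frac x * logpow_sq i x.

Lemma ex_RInt_frac_logpow (i : nat) (b : R) : 1 <= b -> ex_RInt (frac_logpow i) 1 b.
Proof. apply ex_RInt_frac_mult. intros x Hx. apply logpow_sq_continuous. lra. Qed.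

Definition frac_moment (i : nat) : R :=
  RInt_gen (frac_logpow i) (at_point 1) (Rbar_locally p_infty).

Lemma frac_moment_spec (i : nat) : is_RInt_1_oo (frac_logpow i) (frac_moment i).
Proof.
  assert (Hpos : forall x, 1 <= x -> 0 <= frac_logpow i x).
  { intros x Hx. unfold frac_logpow.
    pose proof (frac_bounds x). pose proof (logpow_sq_nonneg i x Hx). nra. }
  assert (Hbound : forall b, 1 <= b -> RInt (frac_logpow i) 1 b <= - logpow_sq_primitive i 1).
  { intros b Hb. apply Rle_trans with (RInt (logpow_sq i) 1 b).
    - apply RInt_le; [lra | apply ex_RInt_frac_logpow; lra | |].
      + apply (ex_RInt_continuous (V := R_CompleteNormedModule)). intros z Hz.
        rewrite Rmin_left in Hz by lra. apply logpow_sq_continuous. lra.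
      + intros x Hx. unfold frac_logpow.
        pose proof (frac_bounds x). pose proof (logpow_sq_nonneg i x ltac:(lra)). nra.
    - rewrite RInt_logpow_sq by lra. pose proof (logpow_sq_primitive_nonpos i b Hb). lra. }
  destruct (is_RInt_1_oo_nonneg _ _ (ex_RInt_frac_logpow i) Hpos Hbound) as [L HL].
  unfold frac_moment. rewrite (is_RInt_gen_unique _ _ HL). exact HL.
Qed.

(* The integrand whose integral over [1, N] is 0^j - (the N-th Stieltjes
   partial expression), and its primitive on [k, k+1]. *)
Definition stieltjes_integrand (j : nat) (x : R) : R :=
  frac_logpow j x - INR j * frac_logpow (pred j) x.

Definition stieltjes_piece_primitive (j k : nat) (y : R) : R :=
  ln y ^ (j + 1) / INR (j + 1) - ln y ^ j + INR k * (ln y ^ j / y).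

Lemma INR_succ_neq_0 (j : nat) : INR (j + 1) <> 0.
Proof. rewrite plus_INR. simpl. pose proof (pos_INR j). lra. Qed.

Lemma stieltjes_seq_step (j N : nat) : (1 <= N)%nat ->
  stieltjes_seq j (S N) = stieltjes_seq j N + ln (INR (S N)) ^ j / INR (S N)
    - (ln (INR (S N)) ^ (j + 1) - ln (INR N) ^ (j + 1)) / INR (j + 1).
Proof.
  intros HN. unfold stieltjes_seq.
  replace (S N - 1)%nat with (S (N - 1)) by lia. rewrite tech5.
  replace (S (N - 1) + 1)%nat with (S N) by lia.
  field. split; [apply INR_succ_neq_0 | apply not_0_INR; lia].
Qed.

Lemma is_RInt_stieltjes_piece (j k : nat) : (1 <= k)%nat ->
  is_RInt (stieltjes_integrand j) (INR k) (INR k + 1) (stieltjes_seq j k - stieltjes_seq j (S k)).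
Proof.
  intros Hk. pose proof (le_INR _ _ Hk) as Hk'. simpl in Hk'.
  set (d := fun y => (y - INR k) * (ln y ^ j / y ^ 2 - INR j * (ln y ^ pred j / y ^ 2))).
  apply is_RInt_ext with d.
  { intros x Hx. rewrite Rmin_left in Hx by lra. rewrite Rmax_right in Hx by lra.
    unfold d, stieltjes_integrand, frac_logpow, logpow_sq.
    rewrite (frac_on_unit_interval k x) by lra.
    match goal with |- ?a = ?b => change (@eq R a b) end. ring. }
  replace (stieltjes_seq j k - stieltjes_seq j (S k))
    with (stieltjes_piece_primitive j k (INR k + 1) - stieltjes_piece_primitive j k (INR k)).
  2:{ rewrite stieltjes_seq_step, S_INR by exact Hk. unfold stieltjes_piece_primitive.
      field. split; [apply INR_succ_neq_0 | lra]. }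
  apply (is_RInt_derive (stieltjes_piece_primitive j k) d).
  - intros x Hx. rewrite Rmin_left in Hx by lra. rewrite Rmax_right in Hx by lra.
    unfold stieltjes_piece_primitive, d. auto_derive; [repeat split; lra|].
    replace (pred (j + 1)) with j by lia.
    pose proof (INR_succ_neq_0 j). field. lra.
  - intros x Hx. rewrite Rmin_left in Hx by lra. rewrite Rmax_right in Hx by lra.
    apply (ex_derive_continuous (K := R_AbsRing) (V := R_NormedModule)). unfold d.
    auto_derive. repeat split; try lra; pose proof (pow_lt x 2 ltac:(lra)); simpl in *; lra.
Qed.

Lemma stieltjes_seq_1 (j : nat) : stieltjes_seq j 1 = 0 ^ j.
Proof.
  unfold stieltjes_seq. simpl sum_f_R0. change (INR (0 + 1)) with 1. change (INR 1) with 1.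
  rewrite ln_1, (pow_i (j + 1)) by lia. pose proof (INR_succ_neq_0 j). field. auto.
Qed.

Lemma is_RInt_stieltjes_integrand (j N : nat) : (1 <= N)%nat ->
  is_RInt (stieltjes_integrand j) 1 (INR N) (0 ^ j - stieltjes_seq j N).
Proof.
  intros HN. induction N as [|N IH]; [lia|].
  destruct (Nat.eq_dec N 0) as [->|HN0].
  - rewrite stieltjes_seq_1. replace (0 ^ j - 0 ^ j) with (@zero R_NormedModule)
      by (unfold zero; simpl; ring).
    apply is_RInt_point.
  - replace (0 ^ j - stieltjes_seq j (S N))
      with (plus (0 ^ j - stieltjes_seq j N) (stieltjes_seq j N - stieltjes_seq j (S N)))
      by (unfold plus; simpl; ring).
    rewrite S_INR.
    apply (is_RInt_Chasles (V := R_NormedModule)) with (INR N); [apply IH; lia|].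
    apply is_RInt_stieltjes_piece. lia.
Qed.

Lemma stieltjes_from_moments (j : nat) :
  stieltjes j = 0 ^ j - (frac_moment j - INR j * frac_moment (pred j)).
Proof.
  assert (Hint : is_RInt_1_oo (stieltjes_integrand j)
                   (frac_moment j + (- INR j) * frac_moment (pred j))).
  { apply is_RInt_1_oo_ext with (fun x => frac_logpow j x + (- INR j) * frac_logpow (pred j) x).
    - intros x _. unfold stieltjes_integrand. ring.
    - apply (is_RInt_gen_plus (V := R_NormedModule) (Fa := at_point 1) (Fb := Rbar_locally p_infty)
        (frac_logpow j) (fun x => - INR j * frac_logpow (pred j) x)).
      + apply frac_moment_spec.
      + apply is_RInt_1_oo_scal, frac_moment_spec. }
  assert (Hseq : is_lim_seq (stieltjes_seq j)
                   (0 ^ j - (frac_moment j + (- INR j) * frac_moment (pred j)))).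
  { apply is_lim_seq_ext_loc with (fun N => 0 ^ j - RInt (stieltjes_integrand j) 1 (INR N)).
    - exists 1%nat. intros N HN.
      rewrite (is_RInt_unique _ _ _ _ (is_RInt_stieltjes_integrand j N HN)). ring.
    - apply is_lim_seq_minus'; [apply is_lim_seq_const | apply is_RInt_1_oo_seq, Hint]. }
  unfold stieltjes. rewrite (is_lim_seq_unique _ _ Hseq). simpl. ring.
Qed.

(* Coefficients of L_n, and the coefficient of gamma_(j+1) in ell_(m+1). *)
Definition laguerre_coef (n k : nat) : R :=
  Binomial.C n k * (-1) ^ k / INR (Factorial.fact k).

Definition ell_weight (m j : nat) : R :=
  Binomial.C m j * (-1) ^ (m - j) / INR (Factorial.fact (S j)).

Lemma neg1_pow_sub (m j : nat) : (j <= m)%nat -> (-1) ^ (m - j) = (-1) ^ m * (-1) ^ j.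
Proof.
  intros Hjm. replace m with ((m - j) + j)%nat at 2 by lia.
  rewrite pow_add, Rmult_assoc, <- pow_add.
  replace (j + j)%nat with (2 * j)%nat by lia. rewrite pow_mult.
  replace ((-1) ^ 2) with 1 by ring. rewrite pow1. ring.
Qed.

Lemma sum_by_parts (x y G : nat -> R) (m : nat) :
  sum_f_R0 (fun j => x j * G j - y j * G (S j)) m =
  sum_f_R0 (fun k => (x k - match k with O => 0 | S k' => y k' end) * G k) m - y m * G (S m).
Proof. induction m as [|m IH]; simpl; [|rewrite IH]; ring. Qed.

Lemma laguerre_coef_pascal (m k : nat) : (k <= m)%nat ->
  (-1) ^ m * laguerre_coef (S m) k
  = ell_weight m k * INR (S k) - match k with O => 0 | S k' => ell_weight m k' end.
Proof.
  intros Hkm. unfold laguerre_coef, ell_weight. destruct k as [|k].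
  - rewrite !C_n_0, Nat.sub_0_r. simpl. field.
  - rewrite !neg1_pow_sub, <- pascal by lia.
    change (Factorial.fact (S (S k))) with (S (S k) * Factorial.fact (S k))%nat.
    rewrite mult_INR. change ((-1) ^ S k) with (-1 * (-1) ^ k).
    pose proof (INR_fact_neq_0 (S k)). pose proof (pos_INR (S k)).
    field. rewrite S_INR. lra.
Qed.

Lemma laguerre_coef_top (m : nat) :
  - ell_weight m m = (-1) ^ m * laguerre_coef (S m) (S m).
Proof.
  unfold laguerre_coef, ell_weight. rewrite !C_n_n, Nat.sub_diag.
  assert (Hsq : (-1) ^ m * (-1) ^ m = 1)
    by (rewrite <- neg1_pow_sub, Nat.sub_diag by lia; reflexivity).
  set (f := INR (Factorial.fact (S m))). change ((-1) ^ S m) with (-1 * (-1) ^ m).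
  transitivity (- ((-1) ^ m * (-1) ^ m) / f); [rewrite Hsq|]; unfold Rdiv; simpl; ring.
Qed.

Section EllFromMoments.

Variable G : nat -> R.
Hypothesis stieltjes_G : forall j, stieltjes j = 0 ^ j - (G j - INR j * G (pred j)).

Lemma ell_succ_laguerre (m : nat) :
  ell (S m) = (-1) ^ m * sum_f_R0 (fun k => laguerre_coef (S m) k * G k) (S m).
Proof.
  assert (Hterm : forall j, (j <= m)%nat ->
    Binomial.C m j * (-1) ^ (S m - (j + 1)) / INR (Factorial.fact (j + 1)) * stieltjes (j + 1)
    = (ell_weight m j * INR (S j)) * G j - ell_weight m j * G (S j)).
  { intros j _. rewrite stieltjes_G. replace (S m - (j + 1))%nat with (m - j)%nat by lia.
    replace (j + 1)%nat with (S j) by lia. unfold ell_weight. simpl pred. simpl (0 ^ S j). ring. }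
  change (ell (S m)) with (sum_f_R0 (fun j => Binomial.C m j * (-1) ^ (S m - (j + 1))
                             / INR (Factorial.fact (j + 1)) * stieltjes (j + 1)) m).
  rewrite (sum_eq _ _ _ Hterm), sum_by_parts, tech5, Rmult_plus_distr_l, scal_sum.
  rewrite (sum_eq _ (fun k => laguerre_coef (S m) k * G k * (-1) ^ m)).
  - rewrite <- (Ropp_involutive (ell_weight m m)), laguerre_coef_top. ring.
  - intros k Hk. rewrite <- laguerre_coef_pascal by exact Hk. ring.
Qed.

Lemma ell_laguerre (n : nat) :
  ell n = powerRZ (-1) (Z.of_nat n - 1) * sum_f_R0 (fun k => laguerre_coef n k * G k) n.
Proof.
  destruct n as [|m].
  - simpl ell. rewrite stieltjes_G. unfold laguerre_coef. simpl. rewrite C_n_0. field.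
  - rewrite ell_succ_laguerre. f_equal.
    rewrite pow_powerRZ. f_equal. lia.
Qed.

End EllFromMoments.

Theorem theorem2p1 (n : nat) :
  exists I : R,
    is_RInt_gen (fun x : R => frac x / x ^ 2 * laguerre n (ln x))
      (at_point 1) (Rbar_locally p_infty) I
    /\ ell n = powerRZ (-1) (Z.of_nat n - 1)%Z * I.
Proof.
  exists (sum_f_R0 (fun k => laguerre_coef n k * frac_moment k) n). split.
  - apply is_RInt_1_oo_ext with (fun x => sum_f_R0 (fun k => laguerre_coef n k * frac_logpow k x) n).
    + intros x _. unfold laguerre. rewrite scal_sum. apply sum_eq. intros k _.
      unfold laguerre_coef, frac_logpow, logpow_sq, Rdiv. ring.
    + apply (is_RInt_1_oo_sum (fun k x => laguerre_coef n k * frac_logpow k x)).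
      intros k _. apply is_RInt_1_oo_scal, frac_moment_spec.
  - apply ell_laguerre, stieltjes_from_moments.
Qed.
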